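(* Let $\mathbf{A}$ be an algebra, let $\mathrm{Adm}(\mathbf{A})$ denote the set of all reflexive compatible binary relations on $\mathbf{A}$, and let $F,G:\mathrm{Adm}(\mathbf{A})\to\mathrm{Adm}(\mathbf{A})$ be arbitrary functions. Suppose that $\mathbf{A}$ has a ternary term $t$ which is Mal'cev modulo $F$ and $G$, i.e. for all $a,b\in A$ and all $R\in\mathrm{Adm}(\mathbf{A})$ with $aRb$ we have $(a,t(a,b,b))\in F(R)$ and $(t(a,a,b),b)\in G(R)$. Then for all $R,S,R_1,R_2,\dots\in\mathrm{Adm}(\mathbf{A})$ and all (arbitrary) binary relations $\theta,\theta_1,\theta_2\subseteq A^2$, the following hold: (i) If $a,b,c,d\in A$ satisfy $aRb$, $b\,\theta_1\,c$, $a\,\theta_2\,d$, $dSc$ and $b\,\theta\, d$, then $(a,c)\in F(R)\circ\overline{\theta_2\cup\theta\cup\theta_1}\circ G(S)$. (ii) $R\circ\theta\circ S\subseteq F(R)\circ\overline{(R\circ\theta)\cup(\theta\circ S)}\circ G(S)$. (iii) $R\circ S\subseteq F(R)\circ\overline{R\cup S}\circ G(S)\subseteq F(R)\circ S\circ R\circ G(S)$. (iv) For every $n\ge 0$, $R\circ_{n+2}S\subseteq F(R)\circ\big(\overline{F(R)\cup F(S)}\big)^n\circ\overline{R\cup S}\circ\big(\overline{G(R)\cup G(S)}\big)^n\circ G(S^\bullet)$, where $S^\bullet=S$ if $n$ is even and $S^\bullet=R$ if $n$ is odd. (v) $R+S\subseteq (F(R)+F(S))\circ\overline{R\cup S}\circ(G(R)+G(S))\subseteq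 (F(R)+F(S))\circ R\circ S\circ(G(R)+G(S))$. (vi) $R\circ R\subseteq F(R)\circ R\circ G(R)$. (vii) For every $n\ge 0$, $R^{n+1}\subseteq (F(R))^n\circ R\circ (G(R))^n$. (viii) $R^*\subseteq (F(R))^*\circ R\circ (G(R))^*$. (ix) $R^-\subseteq F(R^-)\circ R\circ G(R^-)$, and $R\subseteq F(R)\circ R^-\circ G(R)$. (x) $R+S^-\subseteq (F(R)+F(S^-))\circ\overline{R\cup S}\circ(G(R)+G(S^-))\subseteq (F(R)+F(S^-))\circ R\circ S\circ(G(R)+G(S^-))$. (xi) $\mathrm{Cg}(R)\subseteq (F(R)+F(R^-))\circ R\circ (G(R)+G(R^-))$. (xii) For $n\ge 2$, $R_1\circ R_2\circ\dots\circ R_n\subseteq F(R_1)\circ\overline{F(R_1)\cup F(R_2)}\circ\overline{F(R_1)\cup F(R_2)\cup F(R_3)}\circ\dots\circ\overline{F(R_1)\cup\dots\cup F(R_{n-2})}\circ\overline{F(R_1)\cup\dots\cup F(R_{n-1})}\circ\overline{R_1\cup R_2\cup\dots\cup R_n}\circ\overline{G(R_2)\cup G(R_3)\cup\dots\cup G(R_n)}\circ\overline{G(R_3)\cup\dots\cup G(R_n)}\circ\dots\circ\overline{G(R_{n-2})\cup G(R_{n-1})\cup G(R_n)}\circ\overline{G(R_{n-1})\cup G(R_n)}\circ G(R_n)$. (xiii) $R_1+R_2+\dots+R_n\subseteq\big(F(R_1)+F(R_2)+\dots+F(R_n)\big)\circ\overline{R_1\cup R_2\cup\dots\cup R_n}\circ\big(G(R_1)+G(R_2)+\dots+G(R_n)\big)$.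 (xiv) $\mathrm{Cg}(R_1\cup R_2\cup\dots\cup R_n)\subseteq\big(F(R_1)+F(R_1^-)+F(R_2)+F(R_2^-)+\dots+F(R_n)+F(R_n^-)\big)\circ\overline{R_1\cup R_2\cup\dots\cup R_n}\circ\big(G(R_1)+G(R_1^-)+G(R_2)+G(R_2^-)+\dots+G(R_n)+G(R_n^-)\big)$.
   Context: ''Admissible'' and ''compatible'' mean the same thing (closed under the basic operations of the algebra, coordinatewise). Relational composition: $R\circ S=\{(a,c):\exists b\,(aRb \text{ and } bSc)\}$. $R\circ_n S$ denotes $R\circ S\circ R\circ S\circ\cdots$ with $n-1$ occurrences of $\circ$ (i.e. $n$ alternating factors starting with $R$). $R^n=R\circ_n R$, with the convention $R^0$ = the identity relation. $R+S=\bigcup_{n\ge1}R\circ_n S$, and $R_1+R_2+\dots+R_n$ is the analogous union of all finite compositions of the $R_i$ (iterated $+$). $R^-$ is the converse of $R$, $R^*$ is the transitive closure of $R$, $\mathrm{Cg}(R)$ is the smallest congruence containing $R$, and $\overline{R}$ denotes the least compatible relation containing $R$. *)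

From mathcomp Require Import all_boot.
From Stdlib Require Import Relation_Definitions Relation_Operators.
From Stdlib Require List.

Set Implicit Arguments.
Unset Strict Implicit.
Unset Printing Implicit Defensive.

Record signature := Signature { sym : Type ; arity : sym -> nat }.

Record algebra (sig : signature) := Algebra {
  carrier :> Type ;
  op : forall f : sym sig, ('I_(arity f) -> carrier) -> carrier }.

Inductive term (sig : signature) (V : Type) : Type :=
  | Var : V -> term sig V
  | App : forall f : sym sig, ('I_(arity f) -> term sig V) -> term sig V.

Fixpoint eval (sig : signature) (V : Type) (A : algebra sig)
    (env : V -> A) (t : term sig V) : A :=
  match t with
  | Var v => env v
  | App f ts => @op sig A f (fun i => @eval sig V A env (ts i))
  end.

Definition term3_val (sig : signature) (A : algebra sig)
    (t : term sig 'I_3) (a b c : A) : A :=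
  @eval sig 'I_3 A (fun i : 'I_3 => nth a [:: a; b; c] i) t.

Definition brel (T : Type) := T -> T -> Prop.

Definition rincl (T : Type) (R S : brel T) : Prop :=
  forall a b, R a b -> S a b.

Definition rcomp (T : Type) (R S : brel T) : brel T :=
  fun a c => exists b, R a b /\ S b c.

Definition runion (T : Type) (R S : brel T) : brel T :=
  fun a b => R a b \/ S a b.

Definition rconv (T : Type) (R : brel T) : brel T := fun a b => R b a.

Definition reflexive_rel (T : Type) (R : brel T) : Prop := forall a, R a a.

(* R o_n S : n alternating factors starting with R; o_0 = identity. *)
Fixpoint rcompn (T : Type) (n : nat) (R S : brel T) : brel T :=
  match n with
  | 0 => @eq T
  | n'.+1 => match n' with
             | 0 => R
             | _ => rcomp R (rcompn n' S R)
             end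
  end.

Definition rpow (T : Type) (R : brel T) (n : nat) : brel T := rcompn n R R.

Definition rplus (T : Type) (R S : brel T) : brel T :=
  fun a b => exists n, rcompn n.+1 R S a b.

Fixpoint rcomp_list (T : Type) (Rs : seq (brel T)) : brel T :=
  match Rs with
  | [::] => @eq T
  | R :: Rs' => rcomp R (rcomp_list Rs')
  end.

(* R_1 + ... + R_n : union of all finite (nonempty) compositions of
   relations taken from the list Rs. *)
Definition rsum (T : Type) (Rs : seq (brel T)) : brel T :=
  fun a b => exists s : seq (brel T),
    s <> [::] /\ (forall R, List.In R s -> List.In R Rs) /\ rcomp_list s a b.

Definition rbigU (T : Type) (P : nat -> brel T) (m n : nat) : brel T :=
  fun a b => exists i, m <= i <= n /\ P i a b.

Definition compatible (sig : signature) (A : algebra sig) (R : brel A) : Prop :=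
  forall (f : sym sig) (x y : 'I_(arity f) -> A),
    (forall i, R (x i) (y i)) -> R (@op sig A f x) (@op sig A f y).

Definition adm (sig : signature) (A : algebra sig) (R : brel A) : Prop :=
  reflexive_rel R /\ compatible R.

(* The least compatible relation containing R (overline R). *)
Definition rclo (sig : signature) (A : algebra sig) (R : brel A) : brel A :=
  fun a b => forall T : brel A, compatible T -> rincl R T -> T a b.

Definition congruence (sig : signature) (A : algebra sig) (R : brel A) : Prop :=
  equivalence A R /\ compatible R.

Definition Cg (sig : signature) (A : algebra sig) (R : brel A) : brel A :=
  fun a b => forall T : brel A, congruence T -> rincl R T -> T a b.

Definition malcev_mod (sig : signature) (A : algebra sig)
    (F G : brel A -> brel A) (t : term sig 'I_3) : Prop :=
  forall (a b : A) (R : brel A), adm R -> R a b ->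
    F R a (@term3_val sig A t a b b) /\ G R (@term3_val sig A t a a b) b.

From mathcomp Require Import all_boot zify.
From Stdlib Require Import Relation_Definitions Relation_Operators.
From Stdlib Require List.
From Stdlib Require Import FunctionalExtensionality PropExtensionality.

(* Everything rests on one configuration: if R a b, S d c, and a compatible
   relation T contains (a,d), (b,d) and (b,c), then
   a F(R) t(a,b,b) T t(d,d,c) G(S) c.
   A chain a = x_0 R_1 x_1 ... R_n x_n = c is such a configuration with b = x_1
   and d = x_(n-1), where T bounds the two shorter chains R_1 ... R_(n-1) (from a,
   and from b by reflexivity of R_1) and R_2 ... R_n.  Induction on the length
   of the chain gives the estimates for compositions and powers, and, with T the
   target relation itself, for transitive closures; Cg(R) is the transitive
   closure of R and its converse. *)

Set Implicit Arguments.
Unset Strict Implicit.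
Unset Printing Implicit Defensive.

Lemma In_iota i m n : List.In i (iota m n) <-> m <= i < m + n.
Proof. rewrite (List.in_seq n m i); lia. Qed.

Lemma In_cat (U : Type) (s1 s2 : seq U) x :
  List.In x (s1 ++ s2) <-> List.In x s1 \/ List.In x s2.
Proof. exact: List.in_app_iff. Qed.

Lemma In_map (U V : Type) (f : U -> V) (s : seq U) y :
  List.In y (map f s) <-> exists x, f x = y /\ List.In x s.
Proof. exact: List.in_map_iff. Qed.

Lemma In_rcons (U : Type) (s : seq U) x y :
  List.In x (rcons s y) <-> List.In x s \/ y = x.
Proof. by elim: s => [|z s IH] /=; rewrite ?IH; tauto. Qed.

Lemma rcons_nseq (U : Type) n (x : U) : rcons (nseq n x) x = nseq n.+1 x.
Proof. by elim: n => //= n ->. Qed.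

Lemma iotaSr m n : iota m n.+1 = rcons (iota m n) (m + n).
Proof. by rewrite -addn1 iotaD cats1. Qed.

Section Forall2.
Variables (U V : Type) (P : U -> V -> Prop).

Lemma Forall2_cat s1 s2 s1' s2' :
  List.Forall2 P s1 s1' -> List.Forall2 P s2 s2' ->
  List.Forall2 P (s1 ++ s2) (s1' ++ s2').
Proof. by elim=> [|x x' {}s1 {}s1' Pxx' _ IH] //= P2; constructor; last exact: IH. Qed.

Lemma Forall2_map_iota (f : nat -> U) (g : nat -> V) a b m :
  (forall j, j < m -> P (f (a + j)) (g (b + j))) ->
  List.Forall2 P [seq f k | k <- iota a m] [seq g k | k <- iota b m].
Proof.
elim: m a b => [|m IH] a b fg //=; constructor.
  by rewrite -(addn0 a) -(addn0 b); exact: fg.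
by apply: IH => j ltjm; rewrite !addSnnS; apply: fg.
Qed.

End Forall2.

Section Relations.
Variable T : Type.
Implicit Types (R S U X Y : brel T) (s Rs : seq (brel T)).

Lemma rel_ext R S : (forall a b, R a b <-> S a b) -> R = S.
Proof.
move=> RS; apply: functional_extensionality => a.
by apply: functional_extensionality => b; apply: propositional_extensionality.
Qed.

Lemma rincl_trans R S U : rincl R S -> rincl S U -> rincl R U.
Proof. by move=> RS SU a b /RS /SU. Qed.

Lemma rcompA R S U : rcomp R (rcomp S U) = rcomp (rcomp R S) U.
Proof.
apply: rel_ext => a d; split.
  by case=> b [Rab [c [Sbc Ucd]]]; exists c; split => //; exists b.
by case=> c [[b [Rab Sbc]] Ucd]; exists b; split => //; exists c.
Qed.

Lemma rcomp_eql R : rcomp (@eq T) R = R.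
Proof. by apply: rel_ext => a b; split => [[c [<-]] | Rab] //; exists a. Qed.

Lemma rcomp_eqr R : rcomp R (@eq T) = R.
Proof. by apply: rel_ext => a b; split => [[c [Rac <-]] | Rab] //; exists b. Qed.

Lemma runionC R S : runion R S = runion S R.
Proof. by apply: rel_ext => a b; rewrite /runion; tauto. Qed.

Lemma rcomp_mono R R' S S' :
  rincl R R' -> rincl S S' -> rincl (rcomp R S) (rcomp R' S').
Proof. by move=> RR' SS' a c [b [/RR' Rab /SS' Sbc]]; exists b. Qed.

Lemma rcomp_list1 R : rcomp_list [:: R] = R.
Proof. exact: rcomp_eqr. Qed.

Lemma rcomp_list_cat s1 s2 :
  rcomp_list (s1 ++ s2) = rcomp (rcomp_list s1) (rcomp_list s2).
Proof. by elim: s1 => [|R s1 IH] /=; rewrite ?rcomp_eql // IH rcompA. Qed.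

Lemma rcomp_list_rcons s R : rcomp_list (rcons s R) = rcomp (rcomp_list s) R.
Proof. by rewrite -cats1 rcomp_list_cat rcomp_list1. Qed.

Lemma rcomp_list_mono s1 s2 :
  List.Forall2 (@rincl T) s1 s2 -> rincl (rcomp_list s1) (rcomp_list s2).
Proof. by elim=> [|R S {}s1 {}s2 RS _ IH] //=; apply: rcomp_mono. Qed.

Lemma rcomp_list_refl s :
  (forall R, List.In R s -> reflexive_rel R) -> reflexive_rel (rcomp_list s).
Proof.
elim: s => [|R s IH] rs a //=; exists a; split; first by apply: rs; left.
by apply: IH => X Xs; apply: rs; right.
Qed.

Fixpoint ralt n R S : seq (brel T) := if n is n'.+1 then R :: ralt n' S R else [::].

Lemma rcompnE n R S : rcompn n R S = rcomp_list (ralt n R S).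
Proof.
elim: n R S => [|[|n] IH] R S //; first by rewrite /= rcomp_eqr.
exact: (congr1 (rcomp R) (IH S R)).
Qed.

Lemma raltSr n R S : ralt n.+1 R S = rcons (ralt n R S) (if odd n then S else R).
Proof.
elim: n R S => [|n IH] R S //.
change (R :: ralt n.+1 S R = rcons (R :: ralt n S R) (if odd n.+1 then S else R)).
by rewrite IH /=; case: (odd n).
Qed.

Lemma In_ralt n R S X : List.In X (ralt n R S) -> X = R \/ X = S.
Proof. by elim: n R S => [|n IH] R S //= [<- | /IH]; [left | tauto]. Qed.

Lemma rpowE R n : rpow R n = rcomp_list (nseq n R).
Proof. by rewrite /rpow rcompnE; congr rcomp_list; elim: n => //= n ->. Qed.

Lemma rpowS R n : rpow R n.+1 = rcomp R (rpow R n).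
Proof. by rewrite !rpowE. Qed.

Lemma rpowSr R n : rpow R n.+1 = rcomp (rpow R n) R.
Proof. by rewrite /rpow !rcompnE raltSr if_same rcomp_list_rcons. Qed.

Lemma rcomp_rpow_absorb X P M Q Y n :
  rincl X P -> rincl Y Q ->
  rincl (rcomp X (rcomp (rpow P n) (rcomp M (rcomp (rpow Q n) Y))))
        (rcomp (rpow P n.+1) (rcomp M (rpow Q n.+1))).
Proof.
move=> XP YQ; rewrite rpowS rpowSr !rcompA.
by do 4!apply: rcomp_mono => //.
Qed.

Lemma rsum_step Rs R : List.In R Rs -> rincl R (rsum Rs).
Proof.
by move=> RRs a b Rab; exists [:: R]; rewrite rcomp_list1; split=> //; split=> // X [<- | []].
Qed.

Lemma rsum_refl Rs :
  Rs <> [::] -> (forall R, List.In R Rs -> reflexive_rel R) -> reflexive_rel (rsum Rs).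
Proof.
case: Rs => [//|R Rs] _ rRs a.
have RRs : List.In R (R :: Rs) by left.
exact: rsum_step RRs _ _ (rRs R RRs a).
Qed.

Lemma rsum_trans Rs : transitive T (rsum Rs).
Proof.
move=> a b c [s1 [ne1 [sub1 H1]]] [s2 [_ [sub2 H2]]].
exists (s1 ++ s2); split; first by case: s1 ne1 {sub1 H1}.
split; last by rewrite rcomp_list_cat; exists b.
by move=> R /In_cat [/sub1 | /sub2].
Qed.

Lemma rsum_least Rs U :
  (forall R, List.In R Rs -> rincl R U) ->
  (forall R, List.In R Rs -> rincl (rcomp R U) U) -> rincl (rsum Rs) U.
Proof.
move=> base step a b [s [ne [sub H]]].
elim: s ne sub a H => [//|R s IH] _ sub a.
have RRs : List.In R Rs by apply: sub; left.
case: s IH sub => [_ _ | R' s IH sub]; first by rewrite rcomp_list1; apply: base.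
case=> m [Ram Hm]; apply: (step R RRs); exists m; split => //.
by apply: IH => // X HX; apply: sub; right.
Qed.

Lemma rsum_sym Rs :
  (forall R, List.In R Rs -> rincl (rconv R) (rsum Rs)) -> symmetric T (rsum Rs).
Proof.
move=> conv a b; apply: (rsum_least (U := rconv (rsum Rs))) => R RRs x y.
  exact: conv.
by case=> m [Rxm Hmy]; apply: rsum_trans Hmy (conv R RRs _ _ Rxm).
Qed.

Lemma clos_trans_rsum1 X : clos_trans T X = rsum [:: X].
Proof.
apply: rel_ext => a b; split.
  elim=> [x y Xxy | x y z _ Hxy _ Hyz]; first by apply: rsum_step Xxy; left.
  exact: rsum_trans Hxy Hyz.
apply: rsum_least => R [<- | []] x y; first exact: t_step.
by case=> m [Xxm Hmy]; apply: t_trans (t_step _ _ _ _ Xxm) Hmy.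
Qed.

Lemma rplus_rsum X Y :
  reflexive_rel X -> reflexive_rel Y -> rplus X Y = rsum [:: X; Y].
Proof.
move=> rX rY; apply: rel_ext => a b; split.
  case=> n; rewrite rcompnE => H; exists (ralt n.+1 X Y); split => //; split => //.
  by move=> R /In_ralt [->|->]; [left | right; left].
apply: rsum_least => R [<- | [<- | []]] x y.
- by exists 0.
- by exists 1, x.
- by case=> m [Xxm [n Hn]]; exists n.+2, m; split => //; exists m.
- by case=> m [Yxm [n Hn]]; exists n.+2, x; split => //; exists m.
Qed.

End Relations.

Section Compatibility.
Variables (sig : signature) (A : algebra sig).
Implicit Types (R S M X Y : brel A) (s Rs : seq (brel A)).

Lemma rconv_adm R : adm R -> adm (rconv R).
Proof. by case=> rR cR; split=> [a | f x y xy]; [apply: rR | apply: cR]. Qed.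

Lemma eq_compatible : compatible (@eq A).
Proof. by move=> f x y xy; rewrite (functional_extensionality _ _ xy). Qed.

Lemma rcomp_compatible R S :
  compatible R -> compatible S -> compatible (rcomp R S).
Proof.
move=> cR cS f x y xy; have [z xzy] := fin_all_exists xy.
by exists (op z); split; [apply: cR | apply: cS] => i; case: (xzy i).
Qed.

Lemma rcomp_list_compatible s :
  (forall R, List.In R s -> compatible R) -> compatible (rcomp_list s).
Proof.
elim: s => [|R s IH] cs; first exact: eq_compatible.
by apply: rcomp_compatible; [apply: cs; left | apply: IH => X Xs; apply: cs; right].
Qed.

Lemma rpow_compatible R n : compatible R -> compatible (rpow R n).
Proof.
move=> cR; rewrite rpowE; apply: rcomp_list_compatible => X.
by elim: n => [|n IH] //= [<- | /IH].
Qed.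

Lemma compatible_coordinatewise M :
  reflexive_rel M -> transitive A M ->
  (forall f (x : 'I_(arity f) -> A) k u,
     M (x k) u -> M (op x) (op (fun i => if i == k then u else x i))) ->
  compatible M.
Proof.
move=> rM tM single f x y xy.
pose w j (i : 'I_(arity f)) := if (i < j)%N then y i else x i.
have Mw j : M (op x) (op (w j)).
  elim: j => [|j IH].
    have -> : w 0 = x by apply: functional_extensionality.
    exact: rM.
  case: (ltnP j (arity f)) => [ltj | gej].
    apply: tM IH _; pose k := Ordinal ltj.
    have -> : w j.+1 = fun i => if i == k then y k else w j i.
      apply: functional_extensionality => i; rewrite /w ltnS leq_eqVlt.
      case: (i =P k) => [-> | neik]; first by rewrite eqxx.
      by rewrite [_ == _](_ : _ = false) //; apply/eqP => eqij; apply/neik/val_inj.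
    by apply: single; rewrite /w ltnn; apply: xy.
  have -> : w j.+1 = w j; last exact: IH.
  apply: functional_extensionality => i; have lt_ij := leq_trans (ltn_ord i) gej.
  by rewrite /w lt_ij (ltn_trans lt_ij).
have -> : y = w (arity f) by apply: functional_extensionality => i; rewrite /w ltn_ord.
exact: Mw.
Qed.

Lemma rsum_compatible Rs :
  (forall R, List.In R Rs -> adm R) -> Rs <> [::] -> compatible (rsum Rs).
Proof.
move=> aRs ne; apply: compatible_coordinatewise.
- by apply: rsum_refl ne _ => R /aRs [].
- exact: rsum_trans.
move=> f x k u [s [ne_s [sub xu]]]; exists s; split => //; split => //.
have [rs cs] : reflexive_rel (rcomp_list s) /\ compatible (rcomp_list s).
  by split; [apply: rcomp_list_refl | apply: rcomp_list_compatible] => X /sub /aRs [].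
by apply: cs => i; case: eqP => [-> | _].
Qed.

Lemma rsum_congruence Rs :
  (forall R, List.In R Rs -> adm R) -> Rs <> [::] ->
  (forall R, List.In R Rs -> rincl (rconv R) (rsum Rs)) -> congruence (rsum Rs).
Proof.
move=> aRs ne conv; split; last exact: rsum_compatible.
split; [|exact: rsum_trans | exact: rsum_sym].
by apply: rsum_refl ne _ => R /aRs [].
Qed.

Lemma Cg_min X M : congruence M -> rincl X M -> rincl (Cg X) M.
Proof. by move=> cM XM a b; apply. Qed.

Lemma sub_rclo X : rincl X (rclo X).
Proof. by move=> a b Xab M _; apply. Qed.

Lemma rclo_compatible X : compatible (rclo X).
Proof. by move=> f x y xy M cM XM; apply: (cM) => i; exact: xy i M cM XM. Qed.

Lemma rclo_min X M : compatible M -> rincl X M -> rincl (rclo X) M.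
Proof. by move=> cM XM a b; apply. Qed.

Lemma rclo_mono X Y : rincl X Y -> rincl (rclo X) (rclo Y).
Proof.
move=> XY; apply: rclo_min; first exact: rclo_compatible.
exact: rincl_trans XY (@sub_rclo Y).
Qed.

Lemma rclo_runion_sub_rcomp R S : adm R -> adm S -> rincl (rclo (runion R S)) (rcomp R S).
Proof.
move=> [rR cR] [rS cS]; apply: rclo_min; first exact: rcomp_compatible.
by move=> a b [Rab | Sab]; [exists b | exists a].
Qed.

Lemma rcomp_rclo_runion R S X Y : adm R -> adm S ->
  rincl (rcomp X (rcomp (rclo (runion R S)) Y)) (rcomp X (rcomp R (rcomp S Y))).
Proof.
move=> aR aS; rewrite [rcomp R _]rcompA.
by apply: rcomp_mono => //; apply: rcomp_mono => //; apply: rclo_runion_sub_rcomp.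
Qed.

Lemma rbigU_sub_rclo (P : nat -> brel A) i j k :
  i <= k <= j -> rincl (P k) (rclo (rbigU P i j)).
Proof. by move=> ikj a b Pab; apply: sub_rclo; exists k. Qed.

Lemma rclo_rbigU_mono (P : nat -> brel A) i j i' j' :
  i' <= i -> j <= j' -> rincl (rclo (rbigU P i j)) (rclo (rbigU P i' j')).
Proof.
move=> le_i le_j; apply: rclo_mono => a b [k [ikj Pab]].
by exists k; split => //; lia.
Qed.

Lemma eval_compatible M (V : Type) (e1 e2 : V -> A) (u : term sig V) :
  compatible M -> (forall v, M (e1 v) (e2 v)) -> M (eval e1 u) (eval e2 u).
Proof.
move=> cM e12; elim: u => [v | f us IH] /=; first exact: e12.
by apply: cM => i; apply: IH.
Qed.

Lemma term3_val_compatible M (u : term sig 'I_3) a b c a' b' c' :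
  compatible M -> M a a' -> M b b' -> M c c' ->
  M (term3_val u a b c) (term3_val u a' b' c').
Proof. by move=> cM Ma Mb Mc; apply: eval_compatible => // -[[|[|[|i]]] ?]. Qed.

End Compatibility.

Section Malcev.
Variables (sig : signature) (A : algebra sig) (F G : brel A -> brel A).
Variable t : term sig 'I_3.
Hypothesis ht : malcev_mod F G t.
Hypothesis hF : forall R, adm R -> adm (F R).
Hypothesis hG : forall R, adm R -> adm (G R).
Implicit Types (R S M X : brel A) (s Rs : seq (brel A)).

Lemma malcev_sandwich R S M a b c d :
  adm R -> adm S -> compatible M -> R a b -> S d c -> M a d -> M b d -> M b c ->
  rcomp (F R) (rcomp M (G S)) a c.
Proof.
move=> aR aS cM Rab Sdc Mad Mbd Mbc.
exists (term3_val t a b b); split; first exact: (ht aR Rab).1.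
exists (term3_val t d d c); split; first exact: term3_val_compatible.
exact: (ht aS Sdc).2.
Qed.

Lemma malcev_sub R M :
  adm R -> compatible M -> reflexive_rel M -> rincl R (runion M (rconv M)) ->
  rincl R (rcomp (F R) (rcomp M (G R))).
Proof.
move=> aR cM rM RM a c Rac; case: (RM a c Rac) => [Mac | Mca].
  exact: (malcev_sandwich aR aR cM Rac (aR.1 c) Mac (rM c) (rM c)).
exact: (malcev_sandwich aR aR cM Rac Rac (rM a) Mca (rM c)).
Qed.

Lemma rcomp_list_malcev R S s M :
  adm R -> adm S -> compatible M ->
  rincl (rcomp_list (R :: s)) M -> rincl (rcomp_list (rcons s S)) M ->
  rincl (rcomp_list (R :: rcons s S)) (rcomp (F R) (rcomp M (G S))).
Proof.
move=> aR aS cM RsM sSM a c [b [Rab sSbc]].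
have [d [sbd Sdc]] : rcomp (rcomp_list s) S b c by rewrite -rcomp_list_rcons.
apply: (malcev_sandwich aR aS cM Rab Sdc).
- by apply: (RsM a d); exists b.
- by apply: (RsM b d); exists b; split => //; apply: aR.1.
- by apply: (sSM b c).
Qed.

Lemma rsum_malcev_least Rs M :
  (forall R, List.In R Rs -> adm R) -> compatible M ->
  (forall R, List.In R Rs -> rincl R M) ->
  (forall R S, List.In R Rs -> List.In S Rs -> rincl (rcomp (F R) (rcomp M (G S))) M) ->
  rincl (rsum Rs) M.
Proof.
move=> aRs cM RsM absorb a c [s [ne [sub Hs]]].
suff chains n s' : size s' = n.+1 -> (forall R, List.In R s' -> List.In R Rs) ->
    rincl (rcomp_list s') M.
  by case: s ne sub Hs => [//|R s] _ sub; apply: (chains (size s) (R :: s)).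
elim: n s' => [|n IH] [//|R s'] [sz] sub'; have RRs := sub' R (or_introl erefl).
  by case: s' sz {sub'} => // _; rewrite rcomp_list1; apply: RsM.
case/lastP: s' sz sub' => [//|mid S]; rewrite size_rcons => -[sz] sub'.
have subS X : List.In X (rcons mid S) -> List.In X Rs by move=> XS; apply: sub'; right.
have SRs : List.In S Rs by apply: subS; apply/In_rcons; right.
apply: rincl_trans (absorb R S RRs SRs).
apply: rcomp_list_malcev (aRs R RRs) (aRs S SRs) cM _ _.
  apply: IH; first by rewrite /= sz.
  by move=> X [<- // | Xmid]; apply: subS; apply/In_rcons; left.
by apply: IH; [rewrite size_rcons sz | exact: subS].
Qed.

Lemma rsum_malcev Rs M :
  (forall R, List.In R Rs -> adm R) -> compatible M -> reflexive_rel M ->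
  (forall R, List.In R Rs -> rincl R (runion M (rconv M))) ->
  rincl (rsum Rs) (rcomp (rsum (map F Rs)) (rcomp M (rsum (map G Rs)))).
Proof.
case: Rs => [|R0 Rs0] aRs cM rM RsM.
  by move=> a c [[|R s] [ne [sub _]]]; [case: ne | case: (sub R); left].
set Rs := R0 :: Rs0.
have inF R : List.In R Rs -> List.In (F R) (map F Rs) := List.in_map F Rs R.
have inG R : List.In R Rs -> List.In (G R) (map G Rs) := List.in_map G Rs R.
have cFG H : (forall R, adm R -> adm (H R)) -> compatible (rsum (map H Rs)).
  move=> hH; apply: rsum_compatible => // X /In_map [R [<- RRs]].
  exact/hH/aRs.
apply: rsum_malcev_least => //.
- by apply: rcomp_compatible; [apply: cFG | apply: rcomp_compatible => //; apply: cFG].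
- move=> R RRs; apply: rincl_trans (malcev_sub (aRs R RRs) cM rM (RsM R RRs)) _.
  by apply: rcomp_mono (rsum_step (inF R RRs)) (rcomp_mono _ (rsum_step (inG R RRs))).
move=> R S RRs SRs x y [u [Fxu [v [[p [Fup [q [Mpq Gqv]]]] Gvy]]]].
exists p; split; first exact: rsum_trans (rsum_step (inF R RRs) Fxu) Fup.
by exists q; split => //; apply: rsum_trans Gqv (rsum_step (inG S SRs) Gvy).
Qed.

Lemma malcev_rclo_sandwich R S th th1 th2 a b c d :
  adm R -> adm S -> R a b -> th1 b c -> th2 a d -> S d c -> th b d ->
  rcomp (F R) (rcomp (rclo (runion th2 (runion th th1))) (G S)) a c.
Proof.
move=> aR aS Rab th1bc th2ad Sdc thbd.
apply: (malcev_sandwich aR aS (@rclo_compatible _ _ _) Rab Sdc); apply: sub_rclo.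
- by left.
- by right; left.
- by right; right.
Qed.

Lemma rcomp3_sub_malcev R S th : adm R -> adm S ->
  rincl (rcomp R (rcomp th S))
        (rcomp (F R) (rcomp (rclo (runion (rcomp R th) (rcomp th S))) (G S))).
Proof.
move=> aR aS a c [b [Rab [d [thbd Sdc]]]].
apply: (malcev_sandwich aR aS (@rclo_compatible _ _ _) Rab Sdc); apply: sub_rclo.
- by left; exists b.
- by left; exists b; split => //; apply: aR.1.
- by right; exists d.
Qed.

Lemma rcomp_sub_malcev R S : adm R -> adm S ->
  rincl (rcomp R S) (rcomp (F R) (rcomp (rclo (runion R S)) (G S))).
Proof.
move=> aR aS a c [b [Rab Sbc]].
apply: (malcev_sandwich aR aS (@rclo_compatible _ _ _) Rab Sbc); apply: sub_rclo.
- by left.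
- by left; apply: aR.1.
- by right.
Qed.

Lemma rcomp_self_sub_malcev R : adm R -> rincl (rcomp R R) (rcomp (F R) (rcomp R (G R))).
Proof.
move=> aR a c [b [Rab Rbc]].
exact: (malcev_sandwich aR aR aR.2 Rab Rbc Rab (aR.1 b) Rbc).
Qed.

Lemma rcompn_sub_malcev R S n : adm R -> adm S ->
  rincl (rcompn n.+2 R S)
    (rcomp (F R) (rcomp (rpow (rclo (runion (F R) (F S))) n)
      (rcomp (rclo (runion R S)) (rcomp (rpow (rclo (runion (G R) (G S))) n)
        (G (if odd n then R else S)))))).
Proof.
elim: n R S => [|n IH] R S aR aS.
  by rewrite /rpow /= !rcomp_eql; apply: rcomp_sub_malcev.
set PP := rclo (runion (F R) (F S)); set MM := rclo (runion R S).
set QQ := rclo (runion (G R) (G S)).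
have sub_QQ X : X = R \/ X = S -> rincl (G X) QQ.
  by case=> -> a b Gab; apply: sub_rclo; [left | right].
have cT : compatible (rcomp (rpow PP n.+1) (rcomp MM (rpow QQ n.+1))).
  by do ![apply: rcomp_compatible | apply: rpow_compatible | apply: rclo_compatible].
have aX : adm (if odd n.+1 then R else S) by case: (odd n.+1).
rewrite rcompnE -[ralt n.+3 R S]/(R :: ralt n.+2 S R) raltSr.
apply: rincl_trans (rcomp_list_malcev aR aX cT _ _) _.
- rewrite -[R :: _]/(ralt n.+2 R S) -rcompnE.
  apply: rincl_trans (IH R S aR aS) (rcomp_rpow_absorb _ _) => [a b FRab|].
    by apply: sub_rclo; left.
  by apply: sub_QQ; case: (odd n); [left | right].
- rewrite -raltSr -rcompnE.
  have := IH S R aS aR.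
  rewrite [runion (F S) _]runionC [runion S R]runionC [runion (G S) _]runionC.
  move/rincl_trans; apply; apply: rcomp_rpow_absorb => [a b FSab|].
    by apply: sub_rclo; right.
  by apply: sub_QQ; case: (odd n); [right | left].
- by rewrite -!rcompA.
Qed.

Lemma rpow_sub_malcev R n : adm R ->
  rincl (rpow R n.+1) (rcomp (rpow (F R) n) (rcomp R (rpow (G R) n))).
Proof.
move=> aR; elim: n => [|n IH]; first by rewrite /rpow /= rcomp_eql rcomp_eqr.
have cT : compatible (rcomp (rpow (F R) n) (rcomp R (rpow (G R) n))).
  apply: rcomp_compatible; first exact/rpow_compatible/(hF aR).2.
  exact/(rcomp_compatible aR.2)/rpow_compatible/(hG aR).2.
rewrite rpowE in IH; rewrite rpowE -rcons_nseq.
apply: rincl_trans (rcomp_list_malcev aR aR cT IH _) _; first by rewrite rcons_nseq.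
by rewrite -!rcompA; apply: rcomp_rpow_absorb.
Qed.

Lemma rconv_sub_malcev R : adm R ->
  rincl (rconv R) (rcomp (F (rconv R)) (rcomp R (G (rconv R)))).
Proof. by move=> aR; apply: (malcev_sub (rconv_adm aR) aR.2 aR.1) => a b; right. Qed.

Lemma sub_malcev_rconv R : adm R -> rincl R (rcomp (F R) (rcomp (rconv R) (G R))).
Proof.
by move=> aR; have [rR' cR'] := rconv_adm aR; apply: (malcev_sub aR cR' rR') => a b; right.
Qed.

Lemma rplus_malcev R S M :
  adm R -> adm S -> compatible M -> reflexive_rel M ->
  rincl R (runion M (rconv M)) -> rincl S (runion M (rconv M)) ->
  rincl (rplus R S) (rcomp (rplus (F R) (F S)) (rcomp M (rplus (G R) (G S)))).
Proof.
move=> aR aS cM rM RM SM.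
rewrite (rplus_rsum aR.1 aS.1) (rplus_rsum (hF aR).1 (hF aS).1).
rewrite (rplus_rsum (hG aR).1 (hG aS).1).
by apply: (rsum_malcev (Rs := [:: R; S])) => // X [<- | [<- | []]].
Qed.

Lemma rplus_sub_malcev R S : adm R -> adm S ->
  rincl (rplus R S)
        (rcomp (rplus (F R) (F S)) (rcomp (rclo (runion R S)) (rplus (G R) (G S)))).
Proof.
move=> aR aS; apply: (rplus_malcev aR aS (@rclo_compatible _ _ _)).
- by move=> a; apply: sub_rclo; left; apply: aR.1.
- by move=> a b Rab; left; apply: sub_rclo; left.
- by move=> a b Sab; left; apply: sub_rclo; right.
Qed.

Lemma rplus_rconv_sub_malcev R S : adm R -> adm S ->
  rincl (rplus R (rconv S))
        (rcomp (rplus (F R) (F (rconv S)))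
               (rcomp (rclo (runion R S)) (rplus (G R) (G (rconv S))))).
Proof.
move=> aR aS; apply: (rplus_malcev aR (rconv_adm aS) (@rclo_compatible _ _ _)).
- by move=> a; apply: sub_rclo; left; apply: aR.1.
- by move=> a b Rab; left; apply: sub_rclo; left.
- by move=> a b Sba; right; apply: sub_rclo; right.
Qed.

Lemma clos_trans_sub_malcev R : adm R ->
  rincl (clos_trans A R) (rcomp (clos_trans A (F R)) (rcomp R (clos_trans A (G R)))).
Proof.
move=> [rR cR]; rewrite !clos_trans_rsum1.
by apply: (rsum_malcev (Rs := [:: R])) => // X [<- | []] // a b; left.
Qed.

Lemma Cg_sub_malcev R : adm R ->
  rincl (Cg R) (rcomp (rplus (F R) (F (rconv R))) (rcomp R (rplus (G R) (G (rconv R))))).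
Proof.
move=> aR; have aR' := rconv_adm aR.
apply: rincl_trans (rplus_malcev aR aR' aR.2 aR.1 _ _) => [||a b]; [|by left|by right].
apply: Cg_min; last by move=> a b Rab; exists 0.
rewrite (rplus_rsum aR.1 aR'.1); apply: rsum_congruence => // [X [<- | [<- | []]] //|].
by move=> X [<- | [<- | []]]; apply: rsum_step; [right; left | left].
Qed.

(* The factors strictly between F(R_p) and G(R_(p+m+1)) on the right-hand side
   of (xii) for the m+2 relations R_p, ..., R_(p+m+1). *)
Definition ladder (Rf : nat -> brel A) p m : seq (brel A) :=
  [seq rclo (rbigU (fun i => F (Rf i)) p k) | k <- iota p.+1 m]
  ++ [:: rclo (rbigU Rf p (p + m.+1))]
  ++ [seq rclo (rbigU (fun i => G (Rf i)) k (p + m.+1)) | k <- iota p.+1 m].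

Lemma ladder_compatible Rf p m : compatible (rcomp_list (ladder Rf p m)).
Proof.
apply: rcomp_list_compatible => X.
case/In_cat => [| /In_cat [[<- | []] |]];
  try case/In_map => k [<- _]; exact: rclo_compatible.
Qed.

Lemma ladder_sub Rf p q m : p <= q <= p.+1 ->
  rincl (rcomp (F (Rf q)) (rcomp (rcomp_list (ladder Rf q m)) (G (Rf (q + m.+1)))))
        (rcomp_list (ladder Rf p m.+1)).
Proof.
move=> le_pq; rewrite -rcomp_list_rcons.
apply: (@rcomp_list_mono _ (F (Rf q) :: rcons (ladder Rf q m) (G (Rf (q + m.+1))))).
rewrite /ladder {2}iotaSr map_rcons -!cats1 -!catA /=.
constructor; first by apply: rbigU_sub_rclo; lia.
apply: Forall2_cat; first by apply: Forall2_map_iota => j _; apply: rclo_rbigU_mono; lia.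
constructor; first by apply: rclo_rbigU_mono; lia.
apply: Forall2_cat; first by apply: Forall2_map_iota => j _; apply: rclo_rbigU_mono; lia.
by constructor => //; apply: rbigU_sub_rclo; lia.
Qed.

Lemma rcomp_list_sub_ladder Rf p m : (forall i, p <= i <= p + m.+1 -> adm (Rf i)) ->
  rincl (rcomp_list (Rf p :: [seq Rf i | i <- iota p.+1 m.+1]))
        (rcomp (F (Rf p)) (rcomp (rcomp_list (ladder Rf p m)) (G (Rf (p + m.+1))))).
Proof.
elim: m p => [|m IH] p aRf.
  rewrite addn1; apply: (rcomp_list_malcev (s := [::])).
  - by apply: aRf; lia.
  - by apply: aRf; lia.
  - exact: ladder_compatible.
  - by rewrite /ladder /= !rcomp_eqr; apply: rbigU_sub_rclo; lia.
  - by rewrite /ladder /= !rcomp_eqr; apply: rbigU_sub_rclo; lia.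
rewrite iotaSr map_rcons addSnnS.
apply: rincl_trans (rcomp_list_malcev _ _ (@ladder_compatible Rf p m.+1) _ _) _.
- by apply: aRf; lia.
- by apply: aRf; lia.
- by apply: rincl_trans (IH p _) (ladder_sub _) => [i ?|]; [apply: aRf|]; lia.
- rewrite -addSnnS -map_rcons -iotaSr.
  by apply: rincl_trans (IH p.+1 _) (ladder_sub _) => [i ?|]; [apply: aRf|]; lia.
- by rewrite -rcomp_list_rcons.
Qed.

Lemma rcomp_list_sub_malcev (Rf : nat -> brel A) n : 2 <= n ->
  (forall i, 1 <= i <= n -> adm (Rf i)) ->
  rincl (rcomp_list [seq Rf i | i <- iota 1 n])
    (rcomp_list
       ([:: F (Rf 1)]
        ++ [seq rclo (rbigU (fun i => F (Rf i)) 1 k) | k <- iota 2 (n - 2)]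
        ++ [:: rclo (rbigU Rf 1 n)]
        ++ [seq rclo (rbigU (fun i => G (Rf i)) k n) | k <- iota 2 (n - 2)]
        ++ [:: G (Rf n)])).
Proof.
case: n => [|[|m]] // _ aRf; rewrite !subSS subn0.
rewrite (_ : _ ++ _ = F (Rf 1) :: rcons (ladder Rf 1 m) (G (Rf m.+2))); last first.
  by rewrite /ladder -cats1 -!catA.
apply: rincl_trans (rcomp_list_sub_ladder aRf) _.
by rewrite -rcomp_list_rcons.
Qed.

Lemma rsum_sub_malcev (Rf : nat -> brel A) n : 1 <= n ->
  (forall i, 1 <= i <= n -> adm (Rf i)) ->
  rincl (rsum [seq Rf i | i <- iota 1 n])
    (rcomp (rsum [seq F (Rf i) | i <- iota 1 n])
           (rcomp (rclo (rbigU Rf 1 n)) (rsum [seq G (Rf i) | i <- iota 1 n]))).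
Proof.
move=> n_gt0 aRf.
have memRs X : List.In X [seq Rf i | i <- iota 1 n] -> exists2 i, 1 <= i <= n & X = Rf i.
  by case/In_map => i [<- /In_iota lt_i]; exists i => //; lia.
have lt_1 : 1 <= 1 <= n by lia.
have rM : reflexive_rel (rclo (rbigU Rf 1 n)).
  by move=> a; apply: (rbigU_sub_rclo lt_1); apply: (aRf 1 lt_1).1.
apply: rincl_trans (rsum_malcev (M := rclo (rbigU Rf 1 n)) _ _ rM _) _.
- by move=> X /memRs [i /aRf aRi ->].
- exact: rclo_compatible.
- by move=> X /memRs [i lt_i ->] a b Rab; left; apply: (rbigU_sub_rclo lt_i).
- by rewrite -!map_comp.
Qed.

Lemma Cg_rbigU_sub_malcev (Rf : nat -> brel A) n : 1 <= n ->
  (forall i, 1 <= i <= n -> adm (Rf i)) ->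
  rincl (Cg (rbigU Rf 1 n))
    (rcomp (rsum (flatten [seq [:: F (Rf i); F (rconv (Rf i))] | i <- iota 1 n]))
           (rcomp (rclo (rbigU Rf 1 n))
                  (rsum (flatten [seq [:: G (Rf i); G (rconv (Rf i))] | i <- iota 1 n])))).
Proof.
move=> n_gt0 aRf; set Ls := flatten [seq [:: Rf i; rconv (Rf i)] | i <- iota 1 n].
have memLs X : List.In X Ls -> exists2 i, 1 <= i <= n & X = Rf i \/ X = rconv (Rf i).
  case/List.in_concat => Y [/In_map [i [<- /In_iota lt_i]] XY].
  by exists i; [lia | case: XY => [<- | [<- | []]]; [left | right]].
have inLs i : 1 <= i <= n -> List.In (Rf i) Ls /\ List.In (rconv (Rf i)) Ls.
  move=> lt_i; split; apply/List.in_concat; exists [:: Rf i; rconv (Rf i)];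
    (split; last by [left | right; left]);
    by apply/In_map; exists i; split => //; apply/In_iota; lia.
have aLs X : List.In X Ls -> adm X.
  by case/memLs => i /aRf aRi [-> | ->] //; apply: rconv_adm.
have lt_1 : 1 <= 1 <= n by lia.
have rM : reflexive_rel (rclo (rbigU Rf 1 n)).
  by move=> a; apply: (rbigU_sub_rclo lt_1); apply: (aRf 1 lt_1).1.
apply: rincl_trans (Cg_min (rsum_congruence aLs _ _) _) _.
- by move=> eLs; move: (inLs 1 lt_1).1; rewrite eLs.
- move=> X /memLs [i lt_i [-> | ->]]; apply: rsum_step.
  + exact: (inLs i lt_i).2.
  + exact: (inLs i lt_i).1.
- by move=> a b [i [lt_i Rab]]; apply: rsum_step (inLs i lt_i).1 _ _ Rab.
have cM := @rclo_compatible _ _ (rbigU Rf 1 n).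
apply: rincl_trans (rsum_malcev aLs cM rM _) _.
  by move=> X /memLs [i lt_i [-> | ->]] a b Rab; [left | right]; apply: (rbigU_sub_rclo lt_i).
have mapLs H : map H Ls = flatten [seq [:: H (Rf i); H (rconv (Rf i))] | i <- iota 1 n].
  by rewrite /Ls; elim: (iota 1 n) => //= i s ->.
by rewrite !mapLs.
Qed.

End Malcev.

Unset Implicit Arguments.

Theorem theorem1 (sig : signature) (A : algebra sig)
    (F G : brel A -> brel A)
    (hF : forall R : brel A, adm R -> adm (F R))
    (hG : forall R : brel A, adm R -> adm (G R))
    (t : term sig 'I_3) (ht : malcev_mod F G t) :
  (* (i) *)
  (forall (R S th th1 th2 : brel A) (a b c d : A),
     adm R -> adm S ->
     R a b -> th1 b c -> th2 a d -> S d c -> th b d ->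
     rcomp (F R) (rcomp (rclo (runion th2 (runion th th1))) (G S)) a c) /\
  (* (ii) *)
  (forall (R S th : brel A), adm R -> adm S ->
     rincl (rcomp R (rcomp th S))
            (rcomp (F R) (rcomp (rclo (runion (rcomp R th) (rcomp th S))) (G S)))) /\
  (* (iii) *)
  (forall (R S : brel A), adm R -> adm S ->
     rincl (rcomp R S) (rcomp (F R) (rcomp (rclo (runion R S)) (G S))) /\
     rincl (rcomp (F R) (rcomp (rclo (runion R S)) (G S)))
            (rcomp (F R) (rcomp S (rcomp R (G S))))) /\
  (* (iv) *)
  (forall (R S : brel A) (n : nat), adm R -> adm S ->
     rincl (rcompn n.+2 R S)
       (rcomp (F R)
       (rcomp (rpow (rclo (runion (F R) (F S))) n)
       (rcomp (rclo (runion R S))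
       (rcomp (rpow (rclo (runion (G R) (G S))) n)
              (G (if odd n then R else S))))))) /\
  (* (v) *)
  (forall (R S : brel A), adm R -> adm S ->
     rincl (rplus R S)
            (rcomp (rplus (F R) (F S)) (rcomp (rclo (runion R S)) (rplus (G R) (G S)))) /\
     rincl (rcomp (rplus (F R) (F S)) (rcomp (rclo (runion R S)) (rplus (G R) (G S))))
            (rcomp (rplus (F R) (F S)) (rcomp R (rcomp S (rplus (G R) (G S)))))) /\
  (* (vi) *)
  (forall R : brel A, adm R ->
     rincl (rcomp R R) (rcomp (F R) (rcomp R (G R)))) /\
  (* (vii) *)
  (forall (R : brel A) (n : nat), adm R ->
     rincl (rpow R n.+1) (rcomp (rpow (F R) n) (rcomp R (rpow (G R) n)))) /\
  (* (viii) *)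
  (forall R : brel A, adm R ->
     rincl (clos_trans A R)
            (rcomp (clos_trans A (F R)) (rcomp R (clos_trans A (G R))))) /\
  (* (ix) *)
  (forall R : brel A, adm R ->
     rincl (rconv R) (rcomp (F (rconv R)) (rcomp R (G (rconv R)))) /\
     rincl R (rcomp (F R) (rcomp (rconv R) (G R)))) /\
  (* (x) *)
  (forall (R S : brel A), adm R -> adm S ->
     rincl (rplus R (rconv S))
            (rcomp (rplus (F R) (F (rconv S)))
                   (rcomp (rclo (runion R S)) (rplus (G R) (G (rconv S))))) /\
     rincl (rcomp (rplus (F R) (F (rconv S)))
                   (rcomp (rclo (runion R S)) (rplus (G R) (G (rconv S)))))
            (rcomp (rplus (F R) (F (rconv S)))
                   (rcomp R (rcomp S (rplus (G R) (G (rconv S))))))) /\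
  (* (xi) *)
  (forall R : brel A, adm R ->
     rincl (Cg R)
            (rcomp (rplus (F R) (F (rconv R)))
                   (rcomp R (rplus (G R) (G (rconv R)))))) /\
  (* (xii) : family R_1, ..., R_n given by Rf 1, ..., Rf n *)
  (forall (Rf : nat -> brel A) (n : nat), 2 <= n ->
     (forall i, 1 <= i <= n -> adm (Rf i)) ->
     rincl (rcomp_list [seq Rf i | i <- iota 1 n])
       (rcomp_list
          ([:: F (Rf 1)]
           ++ [seq rclo (rbigU (fun i => F (Rf i)) 1 k) | k <- iota 2 (n - 2)]
           ++ [:: rclo (rbigU Rf 1 n)]
           ++ [seq rclo (rbigU (fun i => G (Rf i)) k n) | k <- iota 2 (n - 2)]
           ++ [:: G (Rf n)]))) /\
  (* (xiii) *)
  (forall (Rf : nat -> brel A) (n : nat), 1 <= n ->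
     (forall i, 1 <= i <= n -> adm (Rf i)) ->
     rincl (rsum [seq Rf i | i <- iota 1 n])
       (rcomp (rsum [seq F (Rf i) | i <- iota 1 n])
              (rcomp (rclo (rbigU Rf 1 n))
                     (rsum [seq G (Rf i) | i <- iota 1 n])))) /\
  (* (xiv) *)
  (forall (Rf : nat -> brel A) (n : nat), 1 <= n ->
     (forall i, 1 <= i <= n -> adm (Rf i)) ->
     rincl (Cg (rbigU Rf 1 n))
       (rcomp (rsum (flatten [seq [:: F (Rf i); F (rconv (Rf i))] | i <- iota 1 n]))
              (rcomp (rclo (rbigU Rf 1 n))
                     (rsum (flatten [seq [:: G (Rf i); G (rconv (Rf i))] | i <- iota 1 n]))))).
Proof.
split; first exact: (malcev_rclo_sandwich ht).
split; first exact: (rcomp3_sub_malcev ht).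
split.
  move=> R S aR aS; split; first exact: (rcomp_sub_malcev ht).
  by rewrite runionC; apply: rcomp_rclo_runion.
split; first exact: (rcompn_sub_malcev ht).
split.
  move=> R S aR aS; split; first exact: (rplus_sub_malcev ht hF hG).
  exact: rcomp_rclo_runion.
split; first exact: (rcomp_self_sub_malcev ht).
split; first exact: (rpow_sub_malcev ht hF hG).
split; first exact: (clos_trans_sub_malcev ht hF hG).
split.
  by move=> R aR; split; [exact: (rconv_sub_malcev ht) | exact: (sub_malcev_rconv ht)].
split.
  move=> R S aR aS; split; first exact: (rplus_rconv_sub_malcev ht hF hG).
  exact: rcomp_rclo_runion.
split; first exact: (Cg_sub_malcev ht hF hG).
split; first exact: (rcomp_list_sub_malcev ht).
split; first exact: (rsum_sub_malcev ht hF hG).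
exact: (Cg_rbigU_sub_malcev ht hF hG).
Qed.
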